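(* Let $(N,\langle\cdot,\cdot\rangle,\varphi)$ be a modified $H$-type group (see context). Let $z,z'\in\mathfrak z$ and $e,e'\in\mathfrak v$ be pseudo-orthonormal, i.e. $\langle z,z\rangle,\langle z',z'\rangle,\langle e,e\rangle,\langle e',e'\rangle\in\{\pm1\}$, $\langle z,z'\rangle=0$ and $\langle e,e'\rangle=0$. Then the sectional curvatures satisfy $$K(z,z')=0,\qquad K(z,e)=\tfrac14\,\varepsilon_z\,\varphi(z),\qquad K(e,e')=-\tfrac34\,\varepsilon_e\,\varepsilon_{e'}\,\langle [e,e'],[e,e']\rangle,$$ where $\varepsilon_u=\langle u,u\rangle=\pm1$ for $u\in\{z,e,e'\}$.
   Context: Let $N$ be a 2-step nilpotent real Lie group with Lie algebra $\mathfrak n$, Lie bracket $[\cdot,\cdot]$ and center $\mathfrak z$, endowed with a left-invariant pseudo-Riemannian metric $\langle\cdot,\cdot\rangle$ (identified with an inner product on $\mathfrak n$) for which $\mathfrak z$ is nondegenerate. Put $\mathfrak v=\mathfrak z^\perp$, so $\mathfrak n=\mathfrak z\oplus\mathfrak v$ orthogonally. For $z\in\mathfrak z$ define the skew-adjoint endomorphism $j(z)$ of $\mathfrak v$ by $\langle [x,y],z\rangle=\langle y,j(z)x\rangle$ for all $x,y\in\mathfrak v$. Given a quadratic form $\varphi$ on $\mathfrak z$, the triple $(N,\langle\cdot,\cdot\rangle,\varphi)$ is called a modified $H$-type group if $\langle j(z)x,j(z)y\rangle=\varphi(z)\langle x,y\rangle$ for all $z\in\mathfrak z$, $x,y\in\mathfrak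 v$; equivalently $j(z)^2=-\varphi(z)\,\mathrm{Id}_{\mathfrak v}$ for all $z\in\mathfrak z$. ($\varphi$ may be indefinite or degenerate.) Sectional curvature of a nondegenerate plane spanned by $u,w$ is $K(u,w)=\langle R(u,w)w,u\rangle/(\langle u,u\rangle\langle w,w\rangle-\langle u,w\rangle^2)$ for the Levi-Civita curvature tensor $R$. *)

(* Left-invariant pseudo-Riemannian geometry of a 2-step
   nilpotent Lie group, modelled on its Lie algebra n = R^n (row vectors). *)
From HB Require Import structures.
From mathcomp Require Import all_boot all_order all_algebra.
Set Implicit Arguments. Unset Strict Implicit. Unset Printing Implicit Defensive.
Import Order.TTheory GRing.Theory Num.Theory.
Local Open Scope ring_scope.

Definition ip (R : realFieldType) (n : nat) (g : 'M[R]_n) (x y : 'rV[R]_n) : R :=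
  (x *m g *m y^T) 0 0.

Definition in_center (R : realFieldType) (n : nat)
  (br : 'rV[R]_n -> 'rV[R]_n -> 'rV[R]_n) (x : 'rV[R]_n) : Prop :=
  forall y, br x y = 0.

Definition in_v (R : realFieldType) (n : nat) (g : 'M[R]_n)
  (br : 'rV[R]_n -> 'rV[R]_n -> 'rV[R]_n) (x : 'rV[R]_n) : Prop :=
  forall z, in_center br z -> ip g x z = 0.

(* nab is the Levi-Civita connection on left-invariant fields:
   Koszul formula 2<nab_x y, w> = <[x,y],w> - <[y,w],x> + <[w,x],y>. *)
Definition is_levi_civita (R : realFieldType) (n : nat) (g : 'M[R]_n)
  (br : 'rV[R]_n -> 'rV[R]_n -> 'rV[R]_n)
  (nab : 'rV[R]_n -> 'rV[R]_n -> 'rV[R]_n) : Prop :=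
  forall x y w, ip g (nab x y) w =
    2^-1 * (ip g (br x y) w - ip g (br y w) x + ip g (br w x) y).

Definition curv (R : realFieldType) (n : nat)
  (br nab : 'rV[R]_n -> 'rV[R]_n -> 'rV[R]_n) (u w v : 'rV[R]_n) : 'rV[R]_n :=
  nab u (nab w v) - nab w (nab u v) - nab (br u w) v.

Definition secK (R : realFieldType) (n : nat) (g : 'M[R]_n)
  (br nab : 'rV[R]_n -> 'rV[R]_n -> 'rV[R]_n) (u w : 'rV[R]_n) : R :=
  ip g (curv br nab u w w) u / (ip g u u * ip g w w - ip g u w ^+ 2).

(* The Koszul formula expresses every inner product <nab_x y, w> through
   brackets.  Since the derived algebra [n, n] is central and orthogonal to v,
   almost all terms vanish: for central c one gets <nab_x y, c> = 1/2 <[x,y], c>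
   and <nab_c y, w> = -1/2 <[y,w], c>.  Hence <R(z,z')z', z> = 0,
   <R(z,e)e, z> = 1/4 <j(z)e, j(z)e> = 1/4 phi(z) <e,e> by the H-type condition,
   and <R(e,e')e', e> = -3/4 <[e,e'], [e,e']>.  For pseudo-orthonormal vectors
   the denominator of the sectional curvature is a sign, equal to its own
   inverse. *)
From HB Require Import structures.
From mathcomp Require Import all_boot all_order all_algebra.
From mathcomp Require Import ring lra.
Set Implicit Arguments. Unset Strict Implicit. Unset Printing Implicit Defensive.
Import Order.TTheory GRing.Theory Num.Theory.
Local Open Scope ring_scope.

Section InnerProduct.

Variables (R : realFieldType) (n : nat) (g : 'M[R]_n).

Lemma ip0l (w : 'rV[R]_n) : ip g 0 w = 0.
Proof. by rewrite /ip !mul0mx mxE. Qed.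

Lemma ipBl (x y w : 'rV[R]_n) : ip g (x - y) w = ip g x w - ip g y w.
Proof. by rewrite /ip !mulmxBl !mxE. Qed.

Lemma ipNl (x w : 'rV[R]_n) : ip g (- x) w = - ip g x w.
Proof. by rewrite -sub0r ipBl ip0l sub0r. Qed.

Lemma ipC (g_sym : g^T = g) (x y : 'rV[R]_n) : ip g x y = ip g y x.
Proof.
have trmx11 (A : 'M[R]_1) : A 0 0 = A^T 0 0 by rewrite mxE.
by rewrite /ip trmx11 !trmx_mul trmxK g_sym mulmxA.
Qed.

Lemma secK_pseudo_orthonormal (br nab : 'rV[R]_n -> 'rV[R]_n -> 'rV[R]_n)
    (u w : 'rV[R]_n) :
  ip g u u = 1 \/ ip g u u = -1 -> ip g w w = 1 \/ ip g w w = -1 ->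
  ip g u w = 0 ->
  secK g br nab u w = ip g u u * ip g w w * ip g (curv br nab u w w) u.
Proof.
by rewrite /secK => hu hw ->; case: hu => ->; case: hw => ->; field.
Qed.

End InnerProduct.

Section TwoStepNilpotent.

Variables (R : realFieldType) (n : nat) (g : 'M[R]_n).
Variables (br nab : 'rV[R]_n -> 'rV[R]_n -> 'rV[R]_n).
Hypothesis g_sym : g^T = g.
Hypothesis br_anti : forall x y, br x y = - br y x.
Hypothesis br_2step : forall x y w, br (br x y) w = 0.
Hypothesis nab_LC : is_levi_civita g br nab.

Lemma brxx (x : 'rV[R]_n) : br x x = 0.
Proof.
have : (2 : R) *: br x x = 0 by rewrite scaler_nat mulr2n {1}br_anti addNr.
by move/eqP; rewrite scaler_eq0 pnatr_eq0 => /eqP.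
Qed.

Lemma br_in_center (x y : 'rV[R]_n) : in_center br (br x y).
Proof. exact: br_2step. Qed.

Lemma br_center (x c : 'rV[R]_n) : in_center br c -> br x c = 0.
Proof. by move=> hc; rewrite br_anti hc oppr0. Qed.

Lemma ip_center_v (c x : 'rV[R]_n) :
  in_center br c -> in_v g br x -> ip g c x = 0.
Proof. by move=> hc hx; rewrite ipC //; apply: hx. Qed.

Lemma ip_br_v (a b x : 'rV[R]_n) : in_v g br x -> ip g (br a b) x = 0.
Proof. by move=> hx; apply: ip_center_v => //; apply: br_in_center. Qed.

Lemma ip_nab_center (x y c : 'rV[R]_n) :
  in_center br c -> ip g (nab x y) c = 2^-1 * ip g (br x y) c.
Proof. by move=> hc; rewrite nab_LC (br_center y hc) hc !ip0l subr0 addr0. Qed.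

Lemma ip_nabl_center (c y w : 'rV[R]_n) :
  in_center br c -> ip g (nab c y) w = - 2^-1 * ip g (br y w) c.
Proof. by move=> hc; rewrite nab_LC hc (br_center w hc) !ip0l; ring. Qed.

Lemma ip_curv_center (c c' : 'rV[R]_n) :
  in_center br c -> in_center br c' -> ip g (curv br nab c c' c') c = 0.
Proof.
move=> hc hc'; rewrite /curv !ipBl !ip_nab_center // hc hc' br_2step !ip0l.
by rewrite !mulr0 !subr0.
Qed.

Lemma ip_curv_v (x y : 'rV[R]_n) :
  in_v g br x -> in_v g br y ->
  ip g (curv br nab x y y) x = - (3 / 4) * ip g (br x y) (br x y).
Proof.
move=> hx hy.
have nab_xy : ip g (br x y) (nab x y) = 2^-1 * ip g (br x y) (br x y).
  by rewrite ipC // ip_nab_center //; apply: br_in_center.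
rewrite /curv !ipBl !nab_LC brxx ip0l !(ip_br_v _ _ hx) !(ip_br_v _ _ hy).
by rewrite nab_xy (br_anti y x) ipNl; lra.
Qed.

Variables (j : 'rV[R]_n -> 'rV[R]_n -> 'rV[R]_n).
Hypothesis j_def : forall z x y, in_center br z -> in_v g br x ->
  in_v g br y -> ip g (br x y) z = ip g y (j z x).
Hypothesis j_v : forall z x, in_center br z -> in_v g br x ->
  in_v g br (j z x).

Lemma ip_curv_center_v (z e : 'rV[R]_n) :
  in_center br z -> in_v g br e ->
  ip g (curv br nab z e e) z = 4^-1 * ip g (j z e) (j z e).
Proof.
move=> hz he.
have nab_ze : in_v g br (nab z e).
  by move=> c hc; rewrite ip_nab_center // hz ip0l mulr0.
rewrite /curv !ipBl !ip_nab_center // hz br_2step ip0l.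
rewrite j_def // ip_nabl_center // j_def //; last exact: j_v.
by lra.
Qed.

End TwoStepNilpotent.

Theorem theorem3p3 (R : realFieldType) (n : nat)
  (g : 'M[R]_n) (br : 'rV[R]_n -> 'rV[R]_n -> 'rV[R]_n)
  (j : 'rV[R]_n -> 'rV[R]_n -> 'rV[R]_n) (phi : 'rV[R]_n -> R)
  (nab : 'rV[R]_n -> 'rV[R]_n -> 'rV[R]_n)
  (* nondegenerate symmetric inner product *)
  (g_sym : g^T = g) (g_nd : g \in unitmx)
  (* Lie bracket: bilinear, antisymmetric, 2-step nilpotent *)
  (br_lin : forall (a : R) x y w, br (a *: x + y) w = a *: br x w + br y w)
  (br_anti : forall x y, br x y = - br y x)
  (br_2step : forall x y w, br (br x y) w = 0)
  (br_nonab : exists x y, br x y != 0)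
  (* the center is nondegenerate *)
  (z_nd : forall x, in_center br x ->
            (forall y, in_center br y -> ip g x y = 0) -> x = 0)
  (* j(z) : v -> v with <[x,y],z> = <y, j(z)x> for x, y in v *)
  (j_v : forall z x, in_center br z -> in_v g br x -> in_v g br (j z x))
  (j_def : forall z x y, in_center br z -> in_v g br x -> in_v g br y ->
            ip g (br x y) z = ip g y (j z x))
  (* phi is a quadratic form on z *)
  (phi_quad : exists Phi : 'M[R]_n, Phi^T = Phi /\
            forall z, in_center br z -> phi z = (z *m Phi *m z^T) 0 0)
  (* modified H-type condition *)
  (Htype : forall z x y, in_center br z -> in_v g br x -> in_v g br y ->
            ip g (j z x) (j z y) = phi z * ip g x y)
  (* Levi-Civita connection of the left-invariant metric *)
  (nab_LC : is_levi_civita g br nab)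
  (z z' e e' : 'rV[R]_n)
  (hz : in_center br z) (hz' : in_center br z')
  (he : in_v g br e) (he' : in_v g br e')
  (nz : ip g z z = 1 \/ ip g z z = -1) (nz' : ip g z' z' = 1 \/ ip g z' z' = -1)
  (ne : ip g e e = 1 \/ ip g e e = -1) (ne' : ip g e' e' = 1 \/ ip g e' e' = -1)
  (ozz : ip g z z' = 0) (oee : ip g e e' = 0) :
  secK g br nab z z' = 0 /\
  secK g br nab z e = 4^-1 * ip g z z * phi z /\
  secK g br nab e e' =
    - (3 / 4) * ip g e e * ip g e' e' * ip g (br e e') (br e e').
Proof.
have oze : ip g z e = 0 by apply: ip_center_v.
split; first by rewrite secK_pseudo_orthonormal // ip_curv_center ?mulr0.
split.
  rewrite secK_pseudo_orthonormal // (ip_curv_center_v br_anti br_2step nab_LC j_def j_v) // Htype //.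
  by case: ne => ->; ring.
by rewrite secK_pseudo_orthonormal // ip_curv_v //; ring.
Qed.
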